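(* Let $M$ be a monoidal category and $C$ an $M$-actegory, and let $l\in\mathit{Optic}_{C,C}((x,x),(y,y))$ with corresponding 2-cell $\theta_l:R_x\otimes L_x\Rightarrow R_y\otimes L_y$. The following are equivalent: (i) $\theta_l;\varepsilon_y=\varepsilon_x$ as 2-cells $R_x\otimes L_x\Rightarrow C(-,=)$, and the composite $R_x\otimes L_x\xrightarrow{\theta_l}R_y\otimes L_y\cong R_y\otimes M(-,=)\otimes L_y\xrightarrow{R_y\otimes\eta_y\otimes L_y}R_y\otimes L_y\otimes R_y\otimes L_y$ equals the composite $R_x\otimes L_x\cong R_x\otimes M(-,=)\otimes L_x\xrightarrow{R_x\otimes\eta_x\otimes L_x}R_x\otimes L_x\otimes R_x\otimes L_x\xrightarrow{\theta_l\otimes\theta_l}R_y\otimes L_y\otimes R_y\otimes L_y$; (ii) $\mathrm{outside}(l)=\mathrm{id}_x$ and $\mathrm{once}(l)=\mathrm{twice}(l)$, where, for $l=\langle\alpha\mid\beta\rangle_m$, $\mathrm{outside}(l)=\alpha;\beta\in C(x,x)$, $\mathrm{once}(l)=\langle\alpha\mid\mathrm{id}_{m\odot y}\mid\beta\rangle_{m,m}$ and $\mathrm{twice}(l)=\langle\alpha\mid\beta;\alpha\mid\beta\rangle_{m,m}$ in $\mathit{Optic}^2(x,y)$.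
   Context: $(M,\otimes,I,\lambda,a)$ is a monoidal category; an $M$-actegory is a category $C$ with a functor $\odot:M\times C\to C$ and coherent natural isomorphisms $\lambda_x:I\odot x\to x$, $a_{m,n,x}:(m\otimes n)\odot x\to m\odot(n\odot x)$; $M$ is an $M$-actegory via $\otimes$. Composition is diagrammatic ($f;g$ = $f$ then $g$). $\mathit{Optic}_{C,C}((x,u),(y,v))=\int^{m\in M}C(x,m\odot y)\times C(m\odot v,u)$, elements $\langle\alpha\mid\beta\rangle_m$ modulo $\langle\alpha;(f\odot y)\mid\beta\rangle_m=\langle\alpha\mid(f\odot v);\beta\rangle_n$ for $f:n\to m$. $\mathit{Optic}^2(x,y)=\int^{m_1,m_2\in M}C(x,m_1\odot y)\times C(m_1\odot y,m_2\odot y)\times C(m_2\odot y,x)$, elements written $\langle\alpha\mid\gamma\mid\beta\rangle_{m_1,m_2}$ (quotiented by the coend relations in $m_1$ and $m_2$). $\mathrm{outside}$, $\mathrm{once}$, $\mathrm{twice}$ are well defined on equivalence classes. $\mathit{Tamb}$: the bicategory of $M$-actegories whose hom-category $\mathit{Tamb}_{C,D}$ consists of functors $C^{op}\times D\to\mathrm{Set}$ with compatible strengths $P(c,d)\to P(m\odot c,m\odot d)$ and strength-preserving natural transformations (2-cells); identities are hom-profunctors; composition $(P\otimes Q)(c,e)=\int^d P(c,d)\times Q(d,e)$. For $x\in C$: $R_x\in\mathit{Tamb}_{C,M}$ is $(c,n)\mapsto C(c,n\odot x)$, $L_x\in\mathit{Tamb}_{M,C}$ is $(n,c)\mapsto C(n\odot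 x,c)$ (strengths induced by the action and associator). $\varepsilon_x:R_x\otimes L_x\Rightarrow C(-,=)$ is composition $\int^nC(c,n\odot x)\times C(n\odot x,c')\to C(c,c')$; $\eta_x:M(-,=)\Rightarrow L_x\otimes R_x$ sends $h:k\to k'$ to $h\odot x\in C(k\odot x,k'\odot x)\cong(L_x\otimes R_x)(k,k')$. An optic $l:(x,x)\to(y,y)$ corresponds to the unique 2-cell $\theta_l:R_x\otimes L_x\Rightarrow R_y\otimes L_y$ whose $(x,x)$-component sends the identity optic $\langle\lambda^{-1}_x\mid\lambda_x\rangle_I\in(R_x\otimes L_x)(x,x)$ to $l$. Bicategorical associators/unitors are suppressed. *)

From Stdlib Require Import Relations.Relation_Operators.
Set Implicit Arguments.
Unset Strict Implicit.

Record Cat := {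
  ob :> Type;
  hom : ob -> ob -> Type;
  idm : forall a, hom a a;
  cmp : forall a b c, hom a b -> hom b c -> hom a c;
  cmp_id_l : forall a b (f : hom a b), cmp (idm a) f = f;
  cmp_id_r : forall a b (f : hom a b), cmp f (idm b) = f;
  cmp_assoc : forall a b c d (f : hom a b) (g : hom b c) (h : hom c d),
      cmp (cmp f g) h = cmp f (cmp g h) }.
Arguments hom {c} a b : rename.
Arguments idm {c} a : rename.
Arguments cmp {c a b c0} f g : rename.
Notation "f ;; g" := (cmp f g) (at level 40, left associativity).

Record Monoidal (M : Cat) := {
  tob : M -> M -> M;
  thom : forall a b c d, hom a b -> hom c d -> hom (tob a c) (tob b d);
  thom_id : forall a c, thom (idm a) (idm c) = idm (tob a c);
  thom_cmp : forall a b e c d k (f : hom a b) (g : hom b e) (h : hom c d) (l : hom d k),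
      thom (f ;; g) (h ;; l) = thom f h ;; thom g l;
  munit : M;
  lu : forall a, hom (tob munit a) a;
  lu_inv : forall a, hom a (tob munit a);
  lu_iso1 : forall a, lu a ;; lu_inv a = idm _;
  lu_iso2 : forall a, lu_inv a ;; lu a = idm _;
  lu_nat : forall a b (f : hom a b), thom (idm munit) f ;; lu b = lu a ;; f;
  ru : forall a, hom (tob a munit) a;
  ru_inv : forall a, hom a (tob a munit);
  ru_iso1 : forall a, ru a ;; ru_inv a = idm _;
  ru_iso2 : forall a, ru_inv a ;; ru a = idm _;
  ru_nat : forall a b (f : hom a b), thom f (idm munit) ;; ru b = ru a ;; f;
  asc : forall a b c, hom (tob (tob a b) c) (tob a (tob b c));
  asc_inv : forall a b c, hom (tob a (tob b c)) (tob (tob a b) c);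
  asc_iso1 : forall a b c, asc a b c ;; asc_inv a b c = idm _;
  asc_iso2 : forall a b c, asc_inv a b c ;; asc a b c = idm _;
  asc_nat : forall a a' b b' c c' (f : hom a a') (g : hom b b') (h : hom c c'),
      thom (thom f g) h ;; asc a' b' c' = asc a b c ;; thom f (thom g h);
  pentagon : forall a b c d,
      asc (tob a b) c d ;; asc a b (tob c d)
      = thom (asc a b c) (idm d) ;; asc a (tob b c) d ;; thom (idm a) (asc b c d);
  triangle : forall a b, asc a munit b ;; thom (idm a) (lu b) = thom (ru a) (idm b) }.

Record Actegory (M : Cat) (MS : Monoidal M) (C : Cat) := {
  act : M -> C -> C;
  ahom : forall m n c d, hom m n -> hom c d -> hom (act m c) (act n d);
  ahom_id : forall m c, ahom (idm m) (idm c) = idm (act m c);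
  ahom_cmp : forall m n p c d e (f : hom m n) (g : hom n p) (h : hom c d) (k : hom d e),
      ahom (f ;; g) (h ;; k) = ahom f h ;; ahom g k;
  alu : forall x, hom (act (munit MS) x) x;
  alu_inv : forall x, hom x (act (munit MS) x);
  alu_iso1 : forall x, alu x ;; alu_inv x = idm _;
  alu_iso2 : forall x, alu_inv x ;; alu x = idm _;
  alu_nat : forall x y (f : hom x y), ahom (idm (munit MS)) f ;; alu y = alu x ;; f;
  aasc : forall m n x, hom (act (tob MS m n) x) (act m (act n x));
  aasc_inv : forall m n x, hom (act m (act n x)) (act (tob MS m n) x);
  aasc_iso1 : forall m n x, aasc m n x ;; aasc_inv m n x = idm _;
  aasc_iso2 : forall m n x, aasc_inv m n x ;; aasc m n x = idm _;
  aasc_nat : forall m m' n n' x x' (f : hom m m') (g : hom n n') (h : hom x x'),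
      ahom (thom MS f g) h ;; aasc m' n' x' = aasc m n x ;; ahom f (ahom g h);
  apentagon : forall m n p x,
      aasc (tob MS m n) p x ;; aasc m n (act p x)
      = ahom (asc MS m n p) (idm x) ;; aasc m (tob MS n p) x ;; ahom (idm m) (aasc n p x);
  aunit_l : forall n x, aasc (munit MS) n x ;; alu (act n x) = ahom (lu MS n) (idm x);
  aunit_r : forall m x, aasc m (munit MS) x ;; ahom (idm m) (alu x) = ahom (ru MS m) (idm x) }.

Section Tamb.
Context (M : Cat) (MS : Monoidal M) (C : Cat) (A : Actegory MS C).

Local Notation "m ⊙ c" := (act A m c) (at level 35).
Local Notation "f ⊙h g" := (ahom A f g) (at level 35).

(* (R_x ⊗ L_x)(c,c') = ∫^n C(c, n⊙x) × C(n⊙x, c'), represented by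
   representatives quotiented by the generated equivalence relation.
   For c = c' = x and x := y this is also Optic_{C,C}((x,x),(y,y)). *)
Definition RL (x c c' : C) : Type :=
  { n : M & (hom c (n ⊙ x) * hom (n ⊙ x) c')%type }.

Inductive RL_step (x c c' : C) : RL x c c' -> RL x c c' -> Prop :=
| RL_st : forall (n m : M) (f : hom n m) (u : hom c (n ⊙ x)) (v : hom (m ⊙ x) c'),
    RL_step (existT _ m (u ;; (f ⊙h idm x), v)) (existT _ n (u, (f ⊙h idm x) ;; v)).

Definition RL_eq (x c c' : C) := clos_refl_sym_trans _ (@RL_step x c c').

Definition id_optic (x : C) : RL x x x :=
  existT _ (munit MS) (alu_inv A x, alu A x).

Definition RL_dimap (x c0 c c' c1 : C) (g : hom c0 c) (h : hom c' c1)
  (t : RL x c c') : RL x c0 c1 :=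
  let (n, p) := t in existT _ n (g ;; fst p, snd p ;; h).

Definition RL_str (x : C) (m : M) (c c' : C) (t : RL x c c') : RL x (m ⊙ c) (m ⊙ c') :=
  let (n, p) := t in
  existT _ (tob MS m n)
    ((idm m ⊙h fst p) ;; aasc_inv A m n x, aasc A m n x ;; (idm m ⊙h snd p)).

Definition eps (x c c' : C) (t : RL x c c') : hom c c' :=
  let (n, p) := t in fst p ;; snd p.

(* 2-cells R_x ⊗ L_x ⇒ R_y ⊗ L_y in Tamb_{C,C}: well defined on coend classes,
   natural, and strength preserving. *)
Definition IsTwoCell (x y : C) (θ : forall c c' : C, RL x c c' -> RL y c c') : Prop :=
  (forall c c' (t t' : RL x c c'), RL_eq t t' -> RL_eq (θ c c' t) (θ c c' t'))
  /\ (forall c0 c c' c1 (g : hom c0 c) (h : hom c' c1) (t : RL x c c'),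
        RL_eq (θ c0 c1 (RL_dimap g h t)) (RL_dimap g h (θ c c' t)))
  /\ (forall (m : M) c c' (t : RL x c c'),
        RL_eq (θ (m ⊙ c) (m ⊙ c') (RL_str m t)) (RL_str m (θ c c' t))).

(* (R_x ⊗ L_x ⊗ R_x ⊗ L_x)(c,c') = ∫^{n,d,n'} C(c,n⊙x) × C(n⊙x,d) × C(d,n'⊙x) × C(n'⊙x,c')
   (bicategorical associators suppressed: the iterated coend is presented as one
   coend over (n,d,n') with the three generating relations). *)
Definition RLRL (x c c' : C) : Type :=
  { n : M & { d : C & { n' : M &
     (hom c (n ⊙ x) * hom (n ⊙ x) d * hom d (n' ⊙ x) * hom (n' ⊙ x) c')%type } } }.

Definition mk4 (x c c' : C) (n : M) (d : C) (n' : M)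
  (a : hom c (n ⊙ x)) (b : hom (n ⊙ x) d) (e : hom d (n' ⊙ x)) (k : hom (n' ⊙ x) c')
  : RLRL x c c' :=
  existT _ n (existT _ d (existT _ n' (a, b, e, k))).

Inductive RLRL_step (x c c' : C) : RLRL x c c' -> RLRL x c c' -> Prop :=
| RLRL_st1 : forall n m (f : hom n m) d n' a b e k,
    RLRL_step (@mk4 x c c' m d n' (a ;; (f ⊙h idm x)) b e k)
              (@mk4 x c c' n d n' a ((f ⊙h idm x) ;; b) e k)
| RLRL_st2 : forall n d d' (g : hom d d') n' a b e k,
    RLRL_step (@mk4 x c c' n d' n' a (b ;; g) e k)
              (@mk4 x c c' n d n' a b (g ;; e) k)
| RLRL_st3 : forall n d n' m' (f : hom n' m') a b e k,
    RLRL_step (@mk4 x c c' n d m' a b (e ;; (f ⊙h idm x)) k)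
              (@mk4 x c c' n d n' a b e ((f ⊙h idm x) ;; k)).

Definition RLRL_eq (x c c' : C) := clos_refl_sym_trans _ (@RLRL_step x c c').

(* R_x ⊗ L_x ≅ R_x ⊗ M(-,=) ⊗ L_x --(R_x ⊗ η_x ⊗ L_x)--> R_x ⊗ L_x ⊗ R_x ⊗ L_x :
   <u|v>_n ↦ <u | id_n | v>_{n,n} ↦ <u | id_{n⊙x} | id_{n⊙x} | v>_{n, n⊙x, n} *)
Definition unitEta (x c c' : C) (t : RL x c c') : RLRL x c c' :=
  let (n, p) := t in mk4 (fst p) (idm (n ⊙ x)) (idm (n ⊙ x)) (snd p).

Definition theta2 (x y : C) (θ : forall c c' : C, RL x c c' -> RL y c c')
  (c c' : C) (t : RLRL x c c') : RLRL y c c' :=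
  match t with
  | existT _ n (existT _ d (existT _ n' (a, b, e, k))) =>
      match θ c d (existT _ n (a, b)), θ d c' (existT _ n' (e, k)) with
      | existT _ m1 (a', b'), existT _ m2 (e', k') => mk4 a' b' e' k'
      end
  end.

Definition cond_i (x y : C) (θ : forall c c' : C, RL x c c' -> RL y c c') : Prop :=
  (forall c c' (t : RL x c c'), eps (θ c c' t) = eps t)
  /\ (forall c c' (t : RL x c c'),
        RLRL_eq (unitEta (θ c c' t)) (theta2 θ (unitEta t))).

Definition Optic2 (x y : C) : Type :=
  { m1 : M & { m2 : M &
     (hom x (m1 ⊙ y) * hom (m1 ⊙ y) (m2 ⊙ y) * hom (m2 ⊙ y) x)%type } }.

Definition mk3 (x y : C) (m1 m2 : M) (a : hom x (m1 ⊙ y)) (g : hom (m1 ⊙ y) (m2 ⊙ y))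
  (b : hom (m2 ⊙ y) x) : Optic2 x y :=
  existT _ m1 (existT _ m2 (a, g, b)).

Inductive Optic2_step (x y : C) : Optic2 x y -> Optic2 x y -> Prop :=
| O2_st1 : forall n m1 (f : hom n m1) m2 a g b,
    Optic2_step (@mk3 x y m1 m2 (a ;; (f ⊙h idm y)) g b)
                (@mk3 x y n m2 a ((f ⊙h idm y) ;; g) b)
| O2_st2 : forall m1 n m2 (f : hom n m2) a g b,
    Optic2_step (@mk3 x y m1 m2 a (g ;; (f ⊙h idm y)) b)
                (@mk3 x y m1 n a g ((f ⊙h idm y) ;; b)).

Definition Optic2_eq (x y : C) := clos_refl_sym_trans _ (@Optic2_step x y).

Definition outside (x y : C) (m : M) (α : hom x (m ⊙ y)) (β : hom (m ⊙ y) x) : hom x x :=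
  α ;; β.
Definition once (x y : C) (m : M) (α : hom x (m ⊙ y)) (β : hom (m ⊙ y) x) : Optic2 x y :=
  mk3 α (idm (m ⊙ y)) β.
Definition twice (x y : C) (m : M) (α : hom x (m ⊙ y)) (β : hom (m ⊙ y) x) : Optic2 x y :=
  mk3 α (β ;; α) β.

Definition cond_ii (x y : C) (m : M) (α : hom x (m ⊙ y)) (β : hom (m ⊙ y) x) : Prop :=
  outside α β = idm x /\ Optic2_eq (once α β) (twice α β).

End Tamb.

(* A 2-cell θ : R_x ⊗ L_x ⇒ R_y ⊗ L_y is determined by the optic l = <α|β>_m it
   sends the identity optic to: writing <u|v>_n as u, v acting on the n-fold
   strength of the identity optic, naturality and strength force
     θ <u|v>_n = <u ; (n⊙α) ; a⁻¹ | a ; (n⊙β) ; v>_{n⊗m}.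
   Through this formula ε_y ∘ θ = ε_x amounts to n ⊙ (α;β) = id, i.e. outside(l) = id.
   For the η-condition, composing the two middle legs maps
   (R_y⊗L_y⊗R_y⊗L_y)(x,x) to Optic²(x,y) and sends its two sides at the identity
   optic to once(l) and twice(l); conversely, acting by n and <u|v> on the outer
   legs maps once(l) and twice(l) to its two sides at <u|v>_n. *)
From Stdlib Require Import Relations.Relation_Operators.

Set Implicit Arguments.
Unset Strict Implicit.

Lemma clos_rst_map (T U : Type) (R : T -> T -> Prop) (S : U -> U -> Prop) (f : T -> U) :
  (forall t t', R t t' -> clos_refl_sym_trans _ S (f t) (f t')) ->
  forall t t', clos_refl_sym_trans _ R t t' -> clos_refl_sym_trans _ S (f t) (f t').
Proof.
  intros Hstep t t' H. induction H.
  - apply Hstep; assumption.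
  - apply rst_refl.
  - apply rst_sym; assumption.
  - eapply rst_trans; eassumption.
Qed.

Lemma iso_inv_natural (D : Cat) (a b a' b' : D) (f : hom a a') (g : hom b b')
  (s : hom a b) (si : hom b a) (s' : hom a' b') (si' : hom b' a') :
  si ;; s = idm _ -> s' ;; si' = idm _ ->
  f ;; s' = s ;; g -> g ;; si' = si ;; f.
Proof.
  intros Hs Hs' Hnat.
  rewrite <- (cmp_id_l (g ;; si')), <- Hs, !cmp_assoc, <- (cmp_assoc s g), <- Hnat,
    !cmp_assoc, Hs', cmp_id_r.
  reflexivity.
Qed.

Section Actegory.
Context {M : Cat} {MS : Monoidal M} {C : Cat} (A : Actegory MS C).

Local Notation "m ⊙ c" := (act A m c) (at level 35).
Local Notation "f ⊙h g" := (ahom A f g) (at level 35).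

Lemma ahom_id_cmp (k : M) (a b c : C) (h : hom a b) (l : hom b c) :
  idm k ⊙h (h ;; l) = (idm k ⊙h h) ;; (idm k ⊙h l).
Proof. rewrite <- ahom_cmp, cmp_id_l. reflexivity. Qed.

Lemma aasc_inv_nat (m m' n n' : M) (a a' : C) (f : hom m m') (g : hom n n') (h : hom a a') :
  (f ⊙h (g ⊙h h)) ;; aasc_inv A m' n' a' = aasc_inv A m n a ;; (thom MS f g ⊙h h).
Proof.
  eapply iso_inv_natural; [apply aasc_iso2 | apply aasc_iso1 | apply aasc_nat].
Qed.

Lemma ahom_ru_cancel (n : M) (x : C) :
  (ru_inv MS n ⊙h idm x) ;; (ru MS n ⊙h idm x) = idm (n ⊙ x).
Proof. rewrite <- ahom_cmp, ru_iso2, cmp_id_l, ahom_id. reflexivity. Qed.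

Lemma RL_eq_slide (x c c' : C) (n n' : M) (f : hom n n') (u : hom c (n ⊙ x))
  (v : hom (n' ⊙ x) c') u' v' :
  u' = u ;; (f ⊙h idm x) -> v' = (f ⊙h idm x) ;; v ->
  RL_eq (existT _ n' (u', v) : RL A x c c') (existT _ n (u, v')).
Proof. intros -> ->. apply rst_step. constructor. Qed.

Lemma eps_eq (x c c' : C) (t t' : RL A x c c') : RL_eq t t' -> eps t = eps t'.
Proof.
  induction 1 as [t t' H | | |]; try congruence.
  destruct H. apply cmp_assoc.
Qed.

Lemma RL_dimap_eq (x c0 c c' c1 : C) (g : hom c0 c) (h : hom c' c1) (t t' : RL A x c c') :
  RL_eq t t' -> RL_eq (RL_dimap g h t) (RL_dimap g h t').
Proof.
  apply clos_rst_map. intros ? ? []. simpl.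
  apply RL_eq_slide with (f := f); [symmetry |]; apply cmp_assoc.
Qed.

Lemma RL_str_eq (x : C) (k : M) (c c' : C) (t t' : RL A x c c') :
  RL_eq t t' -> RL_eq (RL_str k t) (RL_str k t').
Proof.
  apply clos_rst_map. intros ? ? []. simpl.
  apply RL_eq_slide with (f := thom MS (idm k) f).
  - rewrite ahom_id_cmp, !cmp_assoc, aasc_inv_nat. reflexivity.
  - rewrite ahom_id_cmp, <- !cmp_assoc, aasc_nat. reflexivity.
Qed.

Lemma RL_str_id_optic (x : C) (n : M) :
  RL_eq (RL_str n (id_optic A x)) (existT _ n (idm _, idm _)).
Proof.
  simpl. apply RL_eq_slide with (f := ru_inv MS n).
  - assert (Hru : (ru MS n ⊙h idm x) ;; ((idm n ⊙h alu_inv A x) ;; aasc_inv A n (munit MS) x)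
               = idm _).
    { rewrite <- aunit_r, !cmp_assoc, <- (cmp_assoc (idm n ⊙h alu A x)), <- ahom_cmp,
        cmp_id_l, alu_iso1, ahom_id, cmp_id_l, aasc_iso1.
      reflexivity. }
    rewrite cmp_id_l, <- (cmp_id_l ((idm n ⊙h alu_inv A x) ;; _)), <- ahom_ru_cancel,
      cmp_assoc, Hru, cmp_id_r.
    reflexivity.
  - rewrite aunit_r, ahom_ru_cancel. reflexivity.
Qed.

Definition RL_tensor (x c d c' : C) (s1 : RL A x c d) (s2 : RL A x d c') : RLRL A x c c' :=
  match s1, s2 with
  | existT _ n1 (a, b), existT _ n2 (e, k) => mk4 a b e k
  end.

Lemma RL_tensor_eq (x c d c' : C) (s1 s1' : RL A x c d) (s2 s2' : RL A x d c') :
  RL_eq s1 s1' -> RL_eq s2 s2' -> RLRL_eq (RL_tensor s1 s2) (RL_tensor s1' s2').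
Proof.
  intros E1 E2. apply rst_trans with (RL_tensor s1' s2).
  - revert s1 s1' E1. apply clos_rst_map. intros ? ? [].
    destruct s2 as [? []]. apply rst_step. constructor.
  - revert s2 s2' E2. apply clos_rst_map. intros ? ? [].
    destruct s1' as [? []]. apply rst_step. constructor.
Qed.

Lemma RLRL_eq_slide1 (x c c' d : C) (n n' n2 : M) (f : hom n n') (a : hom c (n ⊙ x))
  (b : hom (n' ⊙ x) d) (e : hom d (n2 ⊙ x)) (k : hom (n2 ⊙ x) c') a' b' :
  a' = a ;; (f ⊙h idm x) -> b' = (f ⊙h idm x) ;; b ->
  RLRL_eq (mk4 a' b e k) (mk4 a b' e k).
Proof. intros -> ->. apply rst_step. constructor. Qed.

Lemma RLRL_eq_slide2 (x c c' d d' : C) (n n2 : M) (g : hom d d') (a : hom c (n ⊙ x))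
  (b : hom (n ⊙ x) d) (e : hom d' (n2 ⊙ x)) (k : hom (n2 ⊙ x) c') b' e' :
  b' = b ;; g -> e' = g ;; e ->
  RLRL_eq (mk4 a b' e k) (mk4 a b e' k).
Proof. intros -> ->. apply rst_step. constructor. Qed.

Lemma RLRL_eq_slide3 (x c c' d : C) (n n2 n2' : M) (f : hom n2 n2') (a : hom c (n ⊙ x))
  (b : hom (n ⊙ x) d) (e : hom d (n2 ⊙ x)) (k : hom (n2' ⊙ x) c') e' k' :
  e' = e ;; (f ⊙h idm x) -> k' = (f ⊙h idm x) ;; k ->
  RLRL_eq (mk4 a b e' k) (mk4 a b e k').
Proof. intros -> ->. apply rst_step. constructor. Qed.

Lemma unitEta_eq (x c c' : C) (t t' : RL A x c c') :
  RL_eq t t' -> RLRL_eq (unitEta t) (unitEta t').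
Proof.
  apply clos_rst_map. intros ? ? []. simpl.
  eapply rst_trans; [apply RLRL_eq_slide1 with (f := f); reflexivity |].
  eapply rst_trans; [apply RLRL_eq_slide2 with (g := f ⊙h idm x) |].
  1, 2: rewrite ?cmp_id_r, ?cmp_id_l; reflexivity.
  apply RLRL_eq_slide3 with (f := f); rewrite ?cmp_id_r, ?cmp_id_l; reflexivity.
Qed.

Lemma theta2_unitEta (x y c c' : C) (θ : forall c c' : C, RL A x c c' -> RL A y c c')
  (n : M) (u : hom c (n ⊙ x)) (v : hom (n ⊙ x) c') :
  theta2 θ (unitEta (existT _ n (u, v)))
  = RL_tensor (θ c _ (existT _ n (u, idm _))) (θ _ c' (existT _ n (idm _, v))).
Proof. reflexivity. Qed.

Definition Optic2_of_RLRL (x y : C) (t : RLRL A y x x) : Optic2 A x y :=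
  match t with
  | existT _ n (existT _ d (existT _ n' (a, b, e, k))) => mk3 a (b ;; e) k
  end.

Lemma Optic2_of_RLRL_eq (x y : C) (t t' : RLRL A y x x) :
  RLRL_eq t t' -> Optic2_eq (Optic2_of_RLRL t) (Optic2_of_RLRL t').
Proof.
  apply clos_rst_map. intros ? ? []; simpl.
  - rewrite cmp_assoc. apply rst_step. constructor.
  - rewrite cmp_assoc. apply rst_refl.
  - rewrite <- cmp_assoc. apply rst_step. constructor.
Qed.

Definition RLRL_of_Optic2 (x y c c' : C) (n : M) (u : hom c (n ⊙ x)) (v : hom (n ⊙ x) c')
  (o : Optic2 A x y) : RLRL A y c c' :=
  match o with
  | existT _ m1 (existT _ m2 (a, g, b)) =>
      mk4 (u ;; ((idm n ⊙h a) ;; aasc_inv A n m1 y))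
          ((aasc A n m1 y ;; (idm n ⊙h g)) ;; aasc_inv A n m2 y)
          (idm _)
          ((aasc A n m2 y ;; (idm n ⊙h b)) ;; v)
  end.

Lemma RLRL_of_Optic2_eq (x y c c' : C) (n : M) (u : hom c (n ⊙ x)) (v : hom (n ⊙ x) c')
  (o o' : Optic2 A x y) : Optic2_eq o o' -> RLRL_eq (RLRL_of_Optic2 u v o) (RLRL_of_Optic2 u v o').
Proof.
  apply clos_rst_map. intros ? ? [n1 m1 f m2 a g b | m1 n2 m2 f a g b]; simpl.
  - apply RLRL_eq_slide1 with (f := thom MS (idm n) f).
    + rewrite (ahom_id_cmp n a), !cmp_assoc, aasc_inv_nat. reflexivity.
    + rewrite (ahom_id_cmp n _ g), <- !cmp_assoc, aasc_nat. reflexivity.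
  - apply rst_trans with
      (mk4 (u ;; ((idm n ⊙h a) ;; aasc_inv A n m1 y))
           ((aasc A n m1 y ;; (idm n ⊙h g)) ;; aasc_inv A n n2 y)
           ((thom MS (idm n) f ⊙h idm y) ;; idm _)
           ((aasc A n m2 y ;; (idm n ⊙h b)) ;; v)).
    + apply RLRL_eq_slide2 with (g := thom MS (idm n) f ⊙h idm y); [| reflexivity].
      rewrite (ahom_id_cmp n g), !cmp_assoc, aasc_inv_nat. reflexivity.
    + apply RLRL_eq_slide3 with (f := thom MS (idm n) f).
      * rewrite cmp_id_l, cmp_id_r. reflexivity.
      * rewrite (ahom_id_cmp n _ b), <- !cmp_assoc, aasc_nat. reflexivity.
Qed.

Section TwoCell.
Variables (x y : C) (m : M) (α : hom x (m ⊙ y)) (β : hom (m ⊙ y) x).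
Variable θ : forall c c' : C, RL A x c c' -> RL A y c c'.
Arguments θ : clear implicits.
Hypothesis Hθ : IsTwoCell θ.
Hypothesis Hl : RL_eq (θ x x (id_optic A x)) (existT _ m (α, β)).

Lemma theta_dimap_id_optic (c0 c1 : C) (g : hom c0 x) (h : hom x c1) :
  RL_eq (θ c0 c1 (RL_dimap g h (id_optic A x))) (RL_dimap g h (existT _ m (α, β))).
Proof.
  destruct Hθ as [_ [Hnat _]].
  eapply rst_trans; [apply Hnat | apply RL_dimap_eq, Hl].
Qed.

Lemma theta_formula (c c' : C) (n : M) (u : hom c (n ⊙ x)) (v : hom (n ⊙ x) c') :
  RL_eq (θ c c' (existT _ n (u, v)))
    (existT _ (tob MS n m) (u ;; ((idm n ⊙h α) ;; aasc_inv A n m y),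
                             (aasc A n m y ;; (idm n ⊙h β)) ;; v)).
Proof.
  destruct Hθ as [Hwd [Hnat Hstr]].
  replace (existT _ n (u, v) : RL A x c c')
    with (RL_dimap u v (existT _ n (idm _, idm _) : RL A x _ _))
    by (simpl; rewrite cmp_id_l, cmp_id_r; reflexivity).
  eapply rst_trans; [apply Hnat |].
  eapply rst_trans; [apply RL_dimap_eq, Hwd, rst_sym, RL_str_id_optic |].
  eapply rst_trans; [apply RL_dimap_eq, Hstr |].
  exact (RL_dimap_eq u v (RL_str_eq n Hl)).
Qed.

Lemma outside_id_of_eps_theta :
  (forall c c' (t : RL A x c c'), eps (θ c c' t) = eps t) -> outside α β = idm x.
Proof.
  intros Heps. specialize (Heps x x (id_optic A x)).
  rewrite (eps_eq Hl) in Heps. simpl in Heps. rewrite alu_iso2 in Heps. exact Heps.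
Qed.

Lemma eps_theta_of_outside_id :
  outside α β = idm x -> forall c c' (t : RL A x c c'), eps (θ c c' t) = eps t.
Proof.
  unfold outside. intros Hout c c' [n [u v]].
  rewrite (eps_eq (theta_formula u v)). simpl.
  rewrite !cmp_assoc, <- (cmp_assoc (aasc_inv A n m y)), aasc_iso2, cmp_id_l,
    <- (cmp_assoc (idm n ⊙h α)), <- ahom_id_cmp, Hout, ahom_id, cmp_id_l.
  reflexivity.
Qed.

Lemma once_twice_of_eta_theta :
  RLRL_eq (unitEta (θ x x (id_optic A x))) (theta2 θ (unitEta (id_optic A x))) ->
  Optic2_eq (once α β) (twice α β).
Proof.
  intros Heta. apply Optic2_of_RLRL_eq in Heta.
  eapply rst_trans; [| eapply rst_trans; [exact Heta |]].
  - pose proof (Optic2_of_RLRL_eq (unitEta_eq Hl)) as Honce.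
    simpl in Honce. rewrite cmp_id_l in Honce. apply rst_sym, Honce.
  - assert (Hleft : existT _ (munit MS) (alu_inv A x, idm _)
                 = RL_dimap (idm x) (alu_inv A x) (id_optic A x))
      by (simpl; rewrite cmp_id_l, alu_iso1; reflexivity).
    assert (Hright : existT _ (munit MS) (idm _, alu A x)
                  = RL_dimap (alu A x) (idm x) (id_optic A x))
      by (simpl; rewrite cmp_id_r, alu_iso1; reflexivity).
    unfold id_optic. rewrite theta2_unitEta, Hleft, Hright.
    eapply rst_trans.
    { apply Optic2_of_RLRL_eq, RL_tensor_eq; apply theta_dimap_id_optic. }
    simpl. rewrite cmp_id_l, cmp_id_r, !cmp_assoc, <- (cmp_assoc (alu_inv A x)), alu_iso2,
      cmp_id_l.
    apply rst_refl.
Qed.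

Lemma eta_theta_of_once_twice :
  Optic2_eq (once α β) (twice α β) ->
  forall c c' (t : RL A x c c'), RLRL_eq (unitEta (θ c c' t)) (theta2 θ (unitEta t)).
Proof.
  intros Hot c c' [n [u v]].
  eapply rst_trans; [apply unitEta_eq, theta_formula |].
  rewrite theta2_unitEta.
  eapply rst_trans; [| apply rst_sym, RL_tensor_eq; apply theta_formula].
  eapply rst_trans; [| eapply rst_trans; [apply (RLRL_of_Optic2_eq u v Hot) |]].
  - simpl. rewrite ahom_id, cmp_id_r, aasc_iso1. apply rst_refl.
  - simpl. apply RLRL_eq_slide2 with (g := (idm n ⊙h α) ;; aasc_inv A n m y).
    + rewrite ahom_id_cmp, cmp_id_r, !cmp_assoc. reflexivity.
    + rewrite cmp_id_l, cmp_id_r. reflexivity.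
Qed.

End TwoCell.
End Actegory.

Unset Implicit Arguments.

Theorem mainTheorem9 (M : Cat) (MS : Monoidal M) (C : Cat) (A : Actegory MS C)
  (x y : C) (m : M) (α : hom x (act A m y)) (β : hom (act A m y) x)
  (θ : forall c c' : C, RL A x c c' -> RL A y c c')
  (Hθ : IsTwoCell θ)
  (Hl : RL_eq (θ x x (id_optic A x)) (existT _ m (α, β))) :
  cond_i θ <-> cond_ii α β.
Proof.
  split.
  - intros [Heps Heta]. split.
    + exact (outside_id_of_eps_theta Hl Heps).
    + exact (once_twice_of_eta_theta Hθ Hl (Heta x x (id_optic A x))).
  - intros [Hout Hot]. split.
    + exact (eps_theta_of_outside_id Hθ Hl Hout).
    + exact (eta_theta_of_once_twice Hθ Hl Hot).
Qed.
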